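(* For all constants $a_1,b_1,a_2,b_2>0$, with $C_1,C_2$ as defined in the context, $\sup_{\omega\ge0}|C_1(j\omega)C_2(j\omega)|\le 1$.
   Context: For constants $a_1,b_1,a_2,b_2>0$ and complex $s$, set $p_1(s)=a_1+b_1 s$, $p_2(s)=a_2+b_2 s$, $q=p_1+p_2$, and $m(s)=(s^2+q)\sqrt{1-\frac{4p_1p_2}{(s^2+q)^2}}$ with $\sqrt{\cdot}$ the principal complex square root (nonnegative real part), so $m^2=(s^2+q)^2-4p_1p_2$. Define $C_1=\frac{(s^2+q)-m}{2p_2}$ and $C_2=\frac{(s^2+q)-m}{2p_1}$. $j$ denotes the imaginary unit. *)

From Stdlib Require Import Reals Lra.
Open Scope R_scope.

Definition C : Type := (R * R)%type.
Definition RtoC (x : R) : C := (x, 0).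
Definition Cj : C := (0, 1).
Definition Cadd (z w : C) : C := (fst z + fst w, snd z + snd w).
Definition Copp (z : C) : C := (- fst z, - snd z).
Definition Csub (z w : C) : C := Cadd z (Copp w).
Definition Cmul (z w : C) : C :=
  (fst z * fst w - snd z * snd w, fst z * snd w + snd z * fst w).
Definition Cinv (z : C) : C :=
  let d := fst z ^ 2 + snd z ^ 2 in (fst z / d, - snd z / d).
Definition Cdiv (z w : C) : C := Cmul z (Cinv w).
Definition Cmod (z : C) : R := sqrt (fst z ^ 2 + snd z ^ 2).

(* Principal square root: the root with nonnegative real part; on the
   branch cut (negative reals) it returns j*sqrt(-x). *)
Definition Csqrt (z : C) : C :=
  let r := Cmod z in
  (sqrt ((r + fst z) / 2),
   if Rle_dec 0 (snd z) then sqrt ((r - fst z) / 2)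
   else - sqrt ((r - fst z) / 2)).

(* p1(s) = a1 + b1 s, p2(s) = a2 + b2 s, q = p1 + p2 *)
Definition p_lin (a b : R) (s : C) : C := Cadd (RtoC a) (Cmul (RtoC b) s).
Definition qf (a1 b1 a2 b2 : R) (s : C) : C := Cadd (p_lin a1 b1 s) (p_lin a2 b2 s).
Definition s2q (a1 b1 a2 b2 : R) (s : C) : C := Cadd (Cmul s s) (qf a1 b1 a2 b2 s).

Definition mf (a1 b1 a2 b2 : R) (s : C) : C :=
  let t := s2q a1 b1 a2 b2 s in
  Cmul t (Csqrt (Csub (RtoC 1)
     (Cdiv (Cmul (RtoC 4) (Cmul (p_lin a1 b1 s) (p_lin a2 b2 s))) (Cmul t t)))).

Definition C1f (a1 b1 a2 b2 : R) (s : C) : C :=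
  Cdiv (Csub (s2q a1 b1 a2 b2 s) (mf a1 b1 a2 b2 s)) (Cmul (RtoC 2) (p_lin a2 b2 s)).
Definition C2f (a1 b1 a2 b2 : R) (s : C) : C :=
  Cdiv (Csub (s2q a1 b1 a2 b2 s) (mf a1 b1 a2 b2 s)) (Cmul (RtoC 2) (p_lin a1 b1 s)).

(* Write t := s^2+q and u := sqrt(1 - 4 p1 p2 / t^2), so that m = t u and
   4 p1 p2 = t^2 (1 - u)(1 + u).  Then C1 C2 = t^2 (1 - u)^2 / (4 p1 p2)
   = (1 - u) / (1 + u), and since the principal root has Re u >= 0, u is at
   least as close to -1 as to 1, i.e. |1 - u| <= |1 + u|.  On the imaginary
   axis p1, p2 never vanish because a1, a2 > 0. *)
From Pilot Require Import Defs.
From Stdlib Require Import Reals Lra Psatz.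
Open Scope R_scope.

Lemma Cmod_ge0 (z : Defs.C) : 0 <= Cmod z.
Proof. apply sqrt_pos. Qed.

Lemma Cmod_mul (z w : Defs.C) : Cmod (Cmul z w) = Cmod z * Cmod w.
Proof.
  destruct z as [x y], w as [u v]; unfold Cmod, Cmul; simpl.
  rewrite <- sqrt_mult by nra. f_equal; ring.
Qed.

Lemma Cmod_neq0_norm (z : Defs.C) : Cmod z <> 0 -> fst z ^ 2 + snd z ^ 2 <> 0.
Proof. intros Hz E; apply Hz; unfold Cmod; rewrite E; apply sqrt_0. Qed.

Lemma Cmod_neq0_of_fst (z : Defs.C) : fst z <> 0 -> Cmod z <> 0.
Proof.
  intros Hz E; apply sqrt_eq_0 in E; [|nra].
  apply Hz; nra.
Qed.

Lemma Cmul_Cinv_l (z : Defs.C) : Cmod z <> 0 -> Cmul (Cinv z) z = RtoC 1.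
Proof.
  intro Hz; apply Cmod_neq0_norm in Hz.
  destruct z as [x y]; unfold Cmul, Cinv, RtoC; simpl in *; f_equal; field; lra.
Qed.

Lemma Cmod_div (z w : Defs.C) : Cmod w <> 0 -> Cmod (Cdiv z w) = Cmod z / Cmod w.
Proof.
  intro Hw.
  assert (Hinv : Cmod (Cinv w) * Cmod w = 1).
  { rewrite <- Cmod_mul, Cmul_Cinv_l by exact Hw.
    transitivity (sqrt 1); [|apply sqrt_1].
    unfold Cmod, RtoC; simpl; f_equal; ring. }
  unfold Cdiv, Rdiv; rewrite Cmod_mul; f_equal.
  apply (Rmult_eq_reg_r (Cmod w)); [rewrite Hinv, Rinv_l|]; auto.
Qed.

Lemma Cdiv_mulK (z w : Defs.C) : Cmod w <> 0 -> Cmul w (Cdiv z w) = z.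
Proof.
  intro Hw; apply Cmod_neq0_norm in Hw.
  destruct z as [x y], w as [c d]; unfold Cdiv, Cmul, Cinv; simpl in *.
  f_equal; field; lra.
Qed.

Lemma Csqrt_sq (z : Defs.C) : Cmul (Csqrt z) (Csqrt z) = z.
Proof.
  destruct z as [a b]; unfold Csqrt, Cmul; simpl.
  set (r := Cmod (a, b)).
  assert (Hr2 : r * r = a ^ 2 + b ^ 2) by (apply sqrt_sqrt; nra).
  assert (Hr0 : 0 <= r) by apply Cmod_ge0.
  assert (H1 : 0 <= (r + a) / 2) by nra.
  assert (H2 : 0 <= (r - a) / 2) by nra.
  pose proof (sqrt_sqrt _ H1) as S1; pose proof (sqrt_sqrt _ H2) as S2.
  pose proof (sqrt_pos ((r + a) / 2)); pose proof (sqrt_pos ((r - a) / 2)).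
  set (x := sqrt ((r + a) / 2)) in *; set (y := sqrt ((r - a) / 2)) in *.
  assert (Hxy : 2 * (x * y) = Rabs b).
  { apply Rsqr_inj; [nra | apply Rabs_pos |].
    rewrite <- Rsqr_abs; unfold Rsqr.
    replace (2 * (x * y) * (2 * (x * y))) with (4 * (x * x) * (y * y)) by ring.
    rewrite S1, S2; nra. }
  destruct (Rle_dec 0 b).
  - rewrite Rabs_right in Hxy by lra; f_equal; nra.
  - rewrite Rabs_left in Hxy by lra; f_equal; nra.
Qed.

Lemma Csqrt_fst_ge0 (z : Defs.C) : 0 <= fst (Csqrt z).
Proof. apply sqrt_pos. Qed.

Lemma Cmod_1_sub_le_1_add (u : Defs.C) :
  0 <= fst u -> Cmod (Csub (RtoC 1) u) <= Cmod (Cadd (RtoC 1) u).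
Proof.
  intro Hu; apply sqrt_le_1_alt.
  destruct u as [x y]; unfold Csub, Cadd, Copp, RtoC; simpl in *; nra.
Qed.

Lemma Cmod_RtoC2_mul (z : Defs.C) : Cmod (Cmul (RtoC 2) z) = 2 * Cmod z.
Proof.
  rewrite Cmod_mul; f_equal.
  unfold Cmod, RtoC; cbn [fst snd].
  replace (2 ^ 2 + 0 ^ 2) with (2 ^ 2) by ring; apply sqrt_pow2; lra.
Qed.

Section Product_bound.

Variables (t p1 p2 : Defs.C).
Hypotheses (Hp1 : Cmod p1 <> 0) (Hp2 : Cmod p2 <> 0).

Let u : Defs.C :=
  Csqrt (Csub (RtoC 1) (Cdiv (Cmul (RtoC 4) (Cmul p1 p2)) (Cmul t t))).
Let m : Defs.C := Cmul t u.

Lemma sub_m_factor : Csub t m = Cmul t (Csub (RtoC 1) u).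
Proof.
  unfold m; destruct t, u; unfold Csub, Cadd, Copp, Cmul, RtoC; simpl.
  f_equal; ring.
Qed.

Lemma denominator_factor :
  Cmod t <> 0 ->
  Cmul (Cmul (RtoC 2) p2) (Cmul (RtoC 2) p1)
  = Cmul (Cmul t t) (Cmul (Csub (RtoC 1) u) (Cadd (RtoC 1) u)).
Proof.
  intro Ht.
  assert (Htt : Cmod (Cmul t t) <> 0)
    by (rewrite Cmod_mul; intro E; apply Ht; nra).
  replace (Cmul (Csub (RtoC 1) u) (Cadd (RtoC 1) u))
    with (Csub (RtoC 1) (Cmul u u))
    by (destruct u; unfold Csub, Cadd, Copp, Cmul, RtoC; simpl; f_equal; ring).
  assert (Hsub : forall q : Defs.C, Csub (RtoC 1) (Csub (RtoC 1) q) = q)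
    by (intros [x y]; unfold Csub, Cadd, Copp, RtoC; simpl; f_equal; ring).
  unfold u; rewrite Csqrt_sq, Hsub, Cdiv_mulK by exact Htt.
  destruct p1, p2; unfold Cmul, RtoC; simpl; f_equal; ring.
Qed.

Lemma Cmod_product_le1 :
  Cmod (Cmul (Cdiv (Csub t m) (Cmul (RtoC 2) p2))
             (Cdiv (Csub t m) (Cmul (RtoC 2) p1))) <= 1.
Proof.
  assert (D1 : 0 < Cmod (Cmul (RtoC 2) p1))
    by (rewrite Cmod_RtoC2_mul; pose proof (Cmod_ge0 p1); lra).
  assert (D2 : 0 < Cmod (Cmul (RtoC 2) p2))
    by (rewrite Cmod_RtoC2_mul; pose proof (Cmod_ge0 p2); lra).
  rewrite Cmod_mul, !Cmod_div by lra.
  rewrite sub_m_factor, Cmod_mul.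
  set (A := Cmod t); set (B := Cmod (Csub (RtoC 1) u)).
  assert (HA : 0 <= A) by apply Cmod_ge0; assert (HB : 0 <= B) by apply Cmod_ge0.
  (* For t = 0 the division by t^2 in u is junk, but t - m = t (1 - u) vanishes. *)
  destruct (Req_dec A 0) as [A0 | A0].
  { rewrite A0; unfold Rdiv; rewrite !Rmult_0_l; lra. }
  pose proof (f_equal Cmod (denominator_factor A0)) as E.
  rewrite (Cmod_mul (Cmul _ p2)), (Cmod_mul (Cmul t t)), (Cmod_mul t t),
    (Cmod_mul (Csub _ _)) in E.
  fold A B in E; set (D := Cmod (Cadd (RtoC 1) u)) in E.
  assert (HBD : B <= D) by apply Cmod_1_sub_le_1_add, Csqrt_fst_ge0.
  replace (A * B / Cmod (Cmul (RtoC 2) p2) * (A * B / Cmod (Cmul (RtoC 2) p1)))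
    with (A * A * B * B / (Cmod (Cmul (RtoC 2) p2) * Cmod (Cmul (RtoC 2) p1)))
    by (field; lra).
  set (Y := Cmod (Cmul (RtoC 2) p2) * Cmod (Cmul (RtoC 2) p1)) in *.
  assert (HY : 0 < Y) by (unfold Y; nra).
  apply (Rmult_le_reg_r Y); [exact HY |]; unfold Rdiv.
  rewrite Rmult_assoc, Rinv_l, Rmult_1_r, Rmult_1_l by lra.
  assert (0 <= A * A * B) by (apply Rmult_le_pos; nra).
  rewrite E; nra.
Qed.

End Product_bound.

Lemma p_lin_imag_neq0 (a b w : R) : 0 < a -> Cmod (p_lin a b (Cmul Cj (RtoC w))) <> 0.
Proof.
  intro Ha; apply Cmod_neq0_of_fst.
  unfold p_lin, Cadd, Cmul, RtoC, Cj; simpl; nra.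
Qed.

Theorem lemma2 (a1 b1 a2 b2 : R) :
  0 < a1 -> 0 < b1 -> 0 < a2 -> 0 < b2 ->
  forall w : R, 0 <= w ->
    Cmod (Cmul (C1f a1 b1 a2 b2 (Cmul Cj (RtoC w)))
               (C2f a1 b1 a2 b2 (Cmul Cj (RtoC w)))) <= 1.
Proof.
  intros Ha1 _ Ha2 _ w _.
  apply Cmod_product_le1; apply p_lin_imag_neq0; assumption.
Qed.
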